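(* Let $F$, $H$, $X$, $\Omega$, $Q$ and the sequences generated by the IneIREG method be as described in the context, and suppose $H$ is $\mu$-strongly monotone for some $\mu>0$. Suppose $\eta_k\equiv\eta>0$; $\lambda_k\in[\underline\lambda,\overline\lambda]$ for all $k\ge0$ with $0<\underline\lambda\le\overline\lambda<1/L$, $L:=L_F+\eta L_H$; and $\alpha_0\in[0,1]$ and $\alpha_{k+1}\le(1-\beta_k)\alpha_k$ for all $k\ge0$, where $\beta_k:=\big(\frac{1}{1-\lambda_k^2L^2}+\frac{1}{2\lambda_k\eta\mu}\big)^{-1}$. Define $p_k:=\big(\prod_{i=0}^k(1-\beta_i)\big)^{-1}$ for $k\ge0$, for $k\ge1$ $\Lambda_k:=\sum_{j=0}^{k-1}\lambda_j\eta p_j$ and $\overline y_k:=\Lambda_k^{-1}\sum_{j=0}^{k-1}\lambda_j\eta p_jy_j$, and $\beta:=\big(\frac{1}{1-\overline\lambda^2L^2}+\frac{1}{2\underline\lambda\eta\mu}\big)^{-1}\in(0,1)$. Then for all $k\ge1$, $$0\le\mathrm{Gap}(\overline y_k,F,X)\le(k+1)(1-\beta)^k\Big(\frac{D_X^2}{\underline\lambda}\Big)+\eta\Big(\frac{\overline\lambda C_HD_X}{\underline\lambda}\Big).$$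
   Context: Work in $\mathbb{R}^n$ with Euclidean inner product $\langle\cdot,\cdot\rangle$ and norm $\|\cdot\|$. The maps $F\colon \mathrm{Dom}\,F\to\mathbb{R}^n$ and $H\colon\mathrm{Dom}\,H\to\mathbb{R}^n$ are monotone and Lipschitz continuous with constants $L_F>0$ and $L_H>0$; $H$ is $\mu$-strongly monotone means $\langle H(x)-H(y),x-y\rangle\ge\mu\|x-y\|^2$ for all $x,y\in\mathrm{Dom}\,H$. $X$ is a nonempty compact convex set and $\Omega$ a nonempty closed convex set with $X\subset\Omega\subset\mathrm{Dom}\,F\cap\mathrm{Dom}\,H$; $P_X,P_\Omega$ denote orthogonal projections. $Q:=\{x\in X:\langle F(x),y-x\rangle\ge0\ \forall y\in X\}$ is assumed nonempty. $D_X:=\sup_{x,y\in X}\|x-y\|$, $C_H:=\sup_{x\in X}\|H(x)\|$. $\mathrm{Gap}(z,F,X):=\sup_{x\in X}\langle F(x),z-x\rangle$. IneIREG method: start with $x_0=x_{-1}\in X$; for $k=0,1,\dots$, with parameters $\alpha_k\ge0$, $\lambda_k>0$, $\eta_k>0$, set $w_k=x_k+\alpha_k(x_k-x_{k-1})$, $w'_k=P_\Omega(w_k)$, $y_k=P_X\big(w_k-\lambda_k(F(w'_k)+\eta_kH(w'_k))\big)$, $x_{k+1}=P_X\big(w_k-\lambda_k(F(y_k)+\eta_kH(y_k))\big)$. *)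

From HB Require Import structures.
From mathcomp Require Import all_boot all_order all_algebra.
From mathcomp Require Import all_classical all_reals all_analysis.
Set Implicit Arguments. Unset Strict Implicit. Unset Printing Implicit Defensive.
Import Order.TTheory GRing.Theory Num.Theory.
Import numFieldNormedType.Exports.
Local Open Scope classical_set_scope.
Local Open Scope ring_scope.

Definition dotp (R : realType) (n : nat) (u v : 'rV[R]_n) : R :=
  \sum_(i < n) u ord0 i * v ord0 i.
Definition enorm (R : realType) (n : nat) (u : 'rV[R]_n) : R :=
  Num.sqrt (dotp u u).

Definition is_projection (R : realType) (n : nat) (C : set 'rV[R]_n)
  (P : 'rV[R]_n -> 'rV[R]_n) : Prop :=
  forall z, C (P z) /\ forall y, C y -> enorm (z - P z) <= enorm (z - y).

Definition monotone_op (R : realType) (n : nat) (D : set 'rV[R]_n)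
  (F : 'rV[R]_n -> 'rV[R]_n) : Prop :=
  forall x y, D x -> D y -> 0 <= dotp (F x - F y) (x - y).

Definition str_monotone_op (R : realType) (n : nat) (D : set 'rV[R]_n)
  (F : 'rV[R]_n -> 'rV[R]_n) (mu : R) : Prop :=
  forall x y, D x -> D y -> mu * enorm (x - y) ^+ 2 <= dotp (F x - F y) (x - y).

Definition lipschitz_op (R : realType) (n : nat) (D : set 'rV[R]_n)
  (F : 'rV[R]_n -> 'rV[R]_n) (L : R) : Prop :=
  forall x y, D x -> D y -> enorm (F x - F y) <= L * enorm (x - y).

Definition Gap (R : realType) (n : nat) (z : 'rV[R]_n)
  (F : 'rV[R]_n -> 'rV[R]_n) (X : set 'rV[R]_n) : R :=
  sup [set dotp (F x) (z - x) | x in X].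

Definition diamX (R : realType) (n : nat) (X : set 'rV[R]_n) : R :=
  sup [set enorm (xy.1 - xy.2) | xy in X `*` X].

Definition supnorm (R : realType) (n : nat) (H : 'rV[R]_n -> 'rV[R]_n)
  (X : set 'rV[R]_n) : R :=
  sup [set enorm (H x) | x in X].

Definition VIsol (R : realType) (n : nat) (F : 'rV[R]_n -> 'rV[R]_n)
  (X : set 'rV[R]_n) : set 'rV[R]_n :=
  [set x | X x /\ forall y, X y -> 0 <= dotp (F x) (y - x)].

Definition betak (R : realType) (lam L eta mu : R) : R :=
  ((1 - lam ^+ 2 * L ^+ 2)^-1 + (2 * lam * eta * mu)^-1)^-1.

Definition pk (R : realType) (beta : nat -> R) (k : nat) : R :=
  (\prod_(i < k.+1) (1 - beta i))^-1.

Definition Lambdak (R : realType) (lam p : nat -> R) (eta : R) (k : nat) : R :=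
  \sum_(j < k) lam j * eta * p j.

Definition ybar (R : realType) (n : nat) (lam p : nat -> R) (eta : R)
  (y : nat -> 'rV[R]_n) (k : nat) : 'rV[R]_n :=
  (Lambdak lam p eta k)^-1 *: \sum_(j < k) (lam j * eta * p j) *: y j.

(* Each IneIREG step is an extragradient step on the inertial point w_k for the
   regularized operator F + eta H.  The projection inequalities, the Lipschitz
   bounds and the strong monotonicity of H give, for every z in X,
     |x_{k+1} - z|^2 <= (1 - beta_k) |w_k - z|^2 - 2 lam_k <F z + eta H z, y_k - z>,
   where beta_k comes from trading |w_k - z|^2 against the two gains
   (1 - lam_k^2 L^2) |w_k - y_k|^2 and 2 lam_k eta mu |y_k - z|^2.  Weighting
   step k by p_k, the inertial terms are absorbed by a Lyapunov energy (alpha_k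
   decays at least like prod (1 - beta_i)), so that
   2 sum_j lam_j p_j <F z + eta H z, y_j - z> <= (2k + 1) D_X^2.  Bounding
   <H z, y_j - z> by C_H D_X and dividing by Lambda_k >= eta lam_lo (1 - beta)^-k
   bounds <F z, ybar_k - z> uniformly in z, hence the gap; the gap is nonnegative
   because <F z, ybar_k - z> >= 0 at a solution z of the variational inequality. *)

From HB Require Import structures.
From mathcomp Require Import all_boot all_order all_algebra.
From mathcomp Require Import all_classical all_reals all_analysis.
From mathcomp Require Import ring lra.
Import Order.TTheory GRing.Theory Num.Theory.
Import numFieldNormedType.Exports.
Set Implicit Arguments. Unset Strict Implicit. Unset Printing Implicit Defensive.
Local Open Scope classical_set_scope.
Local Open Scope ring_scope.

Section InnerProduct.
Variables (R : realType) (n : nat).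
Implicit Types (u v z : 'rV[R]_n) (t : R).

Lemma dotpC u v : dotp u v = dotp v u.
Proof. by apply: eq_bigr => i _; rewrite mulrC. Qed.

Lemma dotpDl u v z : dotp (u + v) z = dotp u z + dotp v z.
Proof. by rewrite /dotp -big_split; apply: eq_bigr => i _; rewrite !mxE mulrDl. Qed.

Lemma dotpZl t u v : dotp (t *: u) v = t * dotp u v.
Proof. by rewrite /dotp mulr_sumr; apply: eq_bigr => i _; rewrite !mxE mulrA. Qed.

Lemma dotpNl u v : dotp (- u) v = - dotp u v.
Proof. by rewrite -scaleN1r dotpZl mulN1r. Qed.

Lemma dotpBl u v z : dotp (u - v) z = dotp u z - dotp v z.
Proof. by rewrite dotpDl dotpNl. Qed.

Lemma dotpDr u v z : dotp z (u + v) = dotp z u + dotp z v.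
Proof. by rewrite dotpC dotpDl !(dotpC z). Qed.

Lemma dotpZr t u v : dotp v (t *: u) = t * dotp v u.
Proof. by rewrite dotpC dotpZl dotpC. Qed.

Lemma dotpNr u v : dotp v (- u) = - dotp v u.
Proof. by rewrite dotpC dotpNl dotpC. Qed.

Lemma dotpBr u v z : dotp z (u - v) = dotp z u - dotp z v.
Proof. by rewrite dotpDr dotpNr. Qed.

Lemma dotp0r u : dotp u 0 = 0.
Proof. by rewrite /dotp big1 // => i _; rewrite mxE mulr0. Qed.

Lemma dotp_sumr (I : Type) (r : seq I) (P : pred I) (f : I -> 'rV[R]_n) u :
  dotp u (\sum_(j <- r | P j) f j) = \sum_(j <- r | P j) dotp u (f j).
Proof. exact: (big_morph _ (fun a b => dotpDr a b u) (dotp0r u)). Qed.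

Lemma dotpp_ge0 u : 0 <= dotp u u.
Proof. by apply: sumr_ge0 => i _; rewrite -expr2 sqr_ge0. Qed.

Lemma dotpp_eq0 u : dotp u u = 0 -> u = 0.
Proof.
move=> /eqP; rewrite psumr_eq0 => [/allP u0|i _]; last by rewrite -expr2 sqr_ge0.
apply/rowP => i; rewrite !mxE; apply/eqP.
by have := u0 i (mem_index_enum _); rewrite -expr2 sqrf_eq0.
Qed.

Lemma dotp_sqrD u v : dotp (u + v) (u + v) = dotp u u + 2 * dotp u v + dotp v v.
Proof. rewrite !(dotpDl, dotpDr) (dotpC v u); ring. Qed.

Lemma enorm_ge0 u : 0 <= enorm u.
Proof. exact: sqrtr_ge0. Qed.

Lemma enorm_sqr u : enorm u ^+ 2 = dotp u u.
Proof. by rewrite sqr_sqrtr // dotpp_ge0. Qed.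

Lemma enormN u : enorm (- u) = enorm u.
Proof. by rewrite /enorm dotpNl dotpNr opprK. Qed.

Lemma dotp_young t u v : 0 < t -> 2 * dotp u v <= t * dotp u u + t^-1 * dotp v v.
Proof.
move=> t0; have := dotpp_ge0 (t *: u - v).
rewrite !(dotpBl, dotpBr, dotpZl, dotpZr) (dotpC v u) => h.
have t'0 : 0 <= t^-1 by rewrite invr_ge0 ltW.
have := mulr_ge0 t'0 h.
have -> : t^-1 * (t * (t * dotp u u - dotp u v) - (t * dotp u v - dotp v v))
  = t * dotp u u - 2 * dotp u v + t^-1 * dotp v v by field; rewrite gt_eqF.
lra.
Qed.

Lemma cauchy_schwarz u v : dotp u v <= enorm u * enorm v.
Proof.
have [u0|u0] := eqVneq u 0; first by rewrite u0 dotpC dotp0r mulr_ge0 ?enorm_ge0.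
have [v0|v0] := eqVneq v 0; first by rewrite v0 dotp0r mulr_ge0 ?enorm_ge0.
have enorm_gt0 (w : 'rV[R]_n) : w != 0 -> 0 < enorm w.
  move=> w0; rewrite /enorm sqrtr_gt0 lt_neqAle dotpp_ge0 andbT.
  by apply: contra w0 => /eqP/esym/dotpp_eq0 ->.
have [nu nv] := (enorm_gt0 _ u0, enorm_gt0 _ v0).
have := dotp_young u v (divr_gt0 nv nu).
rewrite -!enorm_sqr invf_div.
have -> : enorm v / enorm u * enorm u ^+ 2 + enorm u / enorm v * enorm v ^+ 2
  = 2 * (enorm u * enorm v) by field; rewrite !gt_eqF.
lra.
Qed.

Lemma enormD u v : enorm (u + v) <= enorm u + enorm v.
Proof.
rewrite -ler_sqr ?nnegrE ?addr_ge0 ?enorm_ge0 // enorm_sqr dotp_sqrD sqrrD -!enorm_sqr.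
by have := cauchy_schwarz u v; lra.
Qed.

Lemma enorm_le_mx_norm u : enorm u <= Num.sqrt n%:R * `|u|.
Proof.
rewrite -[`|u|]ger0_norm // -sqrtr_sqr -sqrtrM // ler_sqrt ?mulr_ge0 ?sqr_ge0 //.
have -> : n%:R * `|u| ^+ 2 = \sum_(i < n) `|u| ^+ 2 by rewrite sumr_const card_ord mulr_natl.
apply: ler_sum => i _.
rewrite -expr2 -real_normK ?num_real // lerXn2r ?nnegrE ?normr_ge0 //.
have -> : `|u| = mx_norm u by [].
by rewrite mx_normrE (le_bigmax _ (fun ij => `|u ij.1 ij.2|) (ord0, i)).
Qed.

Lemma dotp_weighted_mean k (c : nat -> R) (y : nat -> 'rV[R]_n) v z :
  \sum_(j < k) c j != 0 ->
  dotp v ((\sum_(j < k) c j)^-1 *: \sum_(j < k) c j *: y j - z)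
  = (\sum_(j < k) c j)^-1 * \sum_(j < k) c j * dotp v (y j - z).
Proof.
move=> S0; set S := \sum_(j < k) c j.
have -> : \sum_(j < k) c j * dotp v (y j - z) =
    \sum_(j < k) dotp v (c j *: y j) - S * dotp v z.
  by rewrite /S mulr_suml -sumrB; apply: eq_bigr => j _; rewrite dotpBr dotpZr mulrBr.
by rewrite dotpBr dotpZr dotp_sumr mulrBr mulKf.
Qed.

End InnerProduct.

Section BoundedSets.
Variables (R : realType) (n : nat) (X : set 'rV[R]_n).
Hypothesis compactX : compact X.

Lemma compact_enorm_bounded : exists M, forall a, X a -> enorm a <= M.
Proof.
have [M [_ /(_ (M + 1)) HM]] := compact_bounded compactX.
exists (Num.sqrt n%:R * (M + 1)) => a Xa.
apply: le_trans (enorm_le_mx_norm a) _.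
by rewrite ler_wpM2l ?sqrtr_ge0 // HM ?ltrDl.
Qed.

Lemma diamX_ub a b : X a -> X b -> enorm (a - b) <= diamX X.
Proof.
move=> Xa Xb; apply: ub_le_sup; last by exists (a, b).
have [M HM] := compact_enorm_bounded.
exists (M + M) => _ [[a' b'] [/= Xa' Xb'] <-].
by apply: le_trans (enormD _ _) _; rewrite enormN lerD ?HM.
Qed.

Lemma supnorm_ub (D : set 'rV[R]_n) (H : 'rV[R]_n -> 'rV[R]_n) LH a :
  X `<=` D -> lipschitz_op D H LH -> 0 <= LH -> X a -> enorm (H a) <= supnorm H X.
Proof.
move=> XD lipH LH0 Xa; apply: ub_le_sup; last by exists a.
exists (enorm (H a) + LH * diamX X) => _ [b Xb <-].
rewrite -[H b](subrK (H a)) addrC; apply: le_trans (enormD _ _) _.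
rewrite lerD2l; apply: le_trans (lipH _ _ (XD _ Xb) (XD _ Xa)) _.
by rewrite ler_wpM2l // diamX_ub.
Qed.

End BoundedSets.

Section GapBounds.
Variables (R : realType) (n : nat) (F : 'rV[R]_n -> 'rV[R]_n) (X : set 'rV[R]_n).
Variables (z : 'rV[R]_n) (b : R).
Hypothesis gap_ub : forall x, X x -> dotp (F x) (z - x) <= b.

Lemma le_Gap x : X x -> dotp (F x) (z - x) <= Gap z F X.
Proof.
move=> Xx; apply: ub_le_sup; last by exists x.
by exists b => _ [x' Xx' <-]; exact: gap_ub.
Qed.

Lemma Gap_le : X !=set0 -> Gap z F X <= b.
Proof.
move=> [x Xx]; apply: ge_sup; first by exists (dotp (F x) (z - x)), x.
by move=> _ [x' Xx' <-]; exact: gap_ub.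
Qed.

End GapBounds.

Lemma le0_of_le_small (R : realFieldType) (a b : R) :
  0 <= b -> (forall t, 0 < t <= 1 -> a <= t * b) -> a <= 0.
Proof.
move=> b0 small; rewrite leNgt; apply/negP => a0.
have ab0 : 0 < a + b by rewrite ltr_wpDr.
have /small : 0 < a / (a + b) <= 1 by rewrite divr_gt0 // ler_pdivrMr // mul1r lerDl.
rewrite mulrAC ler_pdivlMr //; nra.
Qed.

Local Ltac row_ring := apply/rowP => i; rewrite !mxE; ring.

Section Projection.
Variables (R : realType) (n : nat) (C : set 'rV[R]_n) (P : 'rV[R]_n -> 'rV[R]_n).
Hypotheses (convexC : convex_set C) (projP : is_projection C P).

Lemma convex_set_comb a b (t : R) :
  0 <= t <= 1 -> C a -> C b -> C (t *: a + (1 - t) *: b).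
Proof.
move=> /andP[t0 t1] Ca Cb.
have t01 : Itv.spec (@Itv.num_sem R) (Itv.Real `[0%Z, 1%Z]) t.
  by rewrite /Itv.spec /Itv.num_sem /= num_real in_itv /= t0 t1.
by have := @convexC a b (Itv.mk t01); rewrite !inE => /(_ Ca Cb).
Qed.

Lemma projection_obtuse z y : C y -> dotp (z - P z) (y - P z) <= 0.
Proof.
move=> Cy; have [CPz Pmin] := projP z.
set e := z - P z; set d := y - P z.
suff : 2 * dotp e d <= 0 by rewrite pmulr_rle0.
apply: (le0_of_le_small (dotpp_ge0 d)) => t /andP[t0 t1].
have /Pmin : C (t *: y + (1 - t) *: P z) by apply: convex_set_comb => //; rewrite ltW.
rewrite -ler_sqr ?nnegrE ?enorm_ge0 // !enorm_sqr.
have -> : z - (t *: y + (1 - t) *: P z) = e + (- t) *: d.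
  by rewrite /e /d; row_ring.
rewrite -/e dotp_sqrD !dotpZr !dotpZl => h.
have : t * (2 * dotp e d) <= t * (t * dotp d d) by lra.
by rewrite ler_pM2l.
Qed.

Lemma projection_dist_le z y : C y -> enorm (P z - y) <= enorm (z - y).
Proof.
move=> /(projection_obtuse z) obtuse.
rewrite -ler_sqr ?nnegrE ?enorm_ge0 // !enorm_sqr.
have -> : z - y = (z - P z) + (P z - y) by rewrite addrA subrK.
have flip : dotp (z - P z) (P z - y) = - dotp (z - P z) (y - P z) by rewrite -dotpNr opprB.
by rewrite (dotp_sqrD (z - P z)) flip; have := dotpp_ge0 (z - P z); lra.
Qed.

End Projection.

Section OneStep.
Variables (R : realType) (n : nat).
Implicit Types (u v w y z : 'rV[R]_n).

Lemma dotp_sqrD_harmonic (c d : R) u v : 0 < c -> 0 < d ->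
  (c^-1 + d^-1)^-1 * dotp (u + v) (u + v) <= c * dotp u u + d * dotp v v.
Proof.
move=> c0 d0; have := dotp_young u v (divr_gt0 c0 d0); rewrite invf_div => young.
have h0 : 0 <= (c^-1 + d^-1)^-1 by rewrite invr_ge0 addr_ge0 // invr_ge0 ltW.
have -> : c * dotp u u + d * dotp v v =
    (c^-1 + d^-1)^-1 * ((1 + c / d) * dotp u u + (1 + d / c) * dotp v v).
  by field; rewrite ?gt_eqF ?addr_gt0 ?invr_gt0.
by rewrite ler_wpM2l // dotp_sqrD; lra.
Qed.

Lemma extragradient_step w y u z (G1 G2 : 'rV[R]_n) (lam L e : R) :
  0 <= lam -> e ^+ 2 <= dotp (w - y) (w - y) ->
  dotp (w - lam *: G1 - u) (z - u) <= 0 ->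
  dotp (w - lam *: G2 - y) (u - y) <= 0 ->
  dotp (G2 - G1) (u - y) <= L * e * enorm (u - y) ->
  dotp (u - z) (u - z) <= dotp (w - z) (w - z)
    - (1 - lam ^+ 2 * L ^+ 2) * dotp (w - y) (w - y) - 2 * lam * dotp G1 (y - z).
Proof.
move=> lam0 e_le P1 P2 lipG.
have young : 2 * (lam * (L * e * enorm (u - y))) <=
    lam ^+ 2 * L ^+ 2 * dotp (w - y) (w - y) + dotp (u - y) (u - y).
  rewrite -(enorm_sqr (u - y)); have := sqr_ge0 (lam * L * e - enorm (u - y)).
  have : (lam * L) ^+ 2 * e ^+ 2 <= (lam * L) ^+ 2 * dotp (w - y) (w - y).
    by rewrite ler_wpM2l ?sqr_ge0.
  rewrite sqrrB !exprMn; lra.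
have := ler_wpM2l lam0 lipG; move: P1 P2 young.
have -> : w - z = (w - y) + (y - u) + (u - z) by row_ring.
have -> : w - lam *: G1 - u = (w - y) + (y - u) - lam *: G1 by row_ring.
have -> : w - lam *: G2 - y = (w - y) - lam *: G2 by row_ring.
have -> : y - z = (y - u) + (u - z) by row_ring.
rewrite -[z - u]opprB -[u - y]opprB enormN.
(* In the differences a, b, c the claim is a linear combination of the hypotheses. *)
move: (w - y) (y - u) (u - z) (enorm (y - u)) => a b c nb.
rewrite !(dotpDl, dotpDr, dotpBl, dotpBr, dotpZl, dotpZr, dotpNl, dotpNr).
rewrite (dotpC b a) (dotpC c a) (dotpC c b); lra.
Qed.

Lemma inertial_sqr_le x1 x0 z (a : R) : 0 <= a <= 1 ->
  dotp (x1 + a *: (x1 - x0) - z) (x1 + a *: (x1 - x0) - z) <=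
  dotp (x1 - z) (x1 - z) + a * (dotp (x1 - z) (x1 - z) - dotp (x0 - z) (x0 - z))
  + 2 * a * dotp (x1 - x0) (x1 - x0).
Proof.
move=> /andP[a0 a1].
have -> : x1 + a *: (x1 - x0) - z = (x1 - z) + a *: (x1 - x0) by row_ring.
have -> : x0 - z = (x1 - z) + (- 1) *: (x1 - x0) by row_ring.
move: (x1 - z) (x1 - x0) => p d.
rewrite !dotp_sqrD !dotpZr !dotpZl.
have : a * (a * dotp d d) <= a * dotp d d by rewrite ler_piMl // mulr_ge0 // dotpp_ge0.
have := dotpp_ge0 d; lra.
Qed.

End OneStep.

Lemma betak_bounds (R : realType) (lam lo hi L eta mu : R) :
  0 < lo -> lo <= lam <= hi -> 0 <= L -> hi * L < 1 -> 0 < eta -> 0 < mu ->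
  [/\ 0 < betak lam L eta mu, betak lam L eta mu < 1 &
      ((1 - hi ^+ 2 * L ^+ 2)^-1 + (2 * lo * eta * mu)^-1)^-1 <= betak lam L eta mu].
Proof.
move=> lo0 /andP[lo_lam lam_hi] L0 hiL eta0 mu0.
have lam0 : 0 < lam := lt_le_trans lo0 lo_lam.
have hi0 : 0 < hi := lt_le_trans lam0 lam_hi.
have lamL : (lam * L) ^+ 2 <= (hi * L) ^+ 2.
  by rewrite ler_sqr ?nnegrE ?mulr_ge0 ?ler_wpM2r // ltW.
have hiL2 : (hi * L) ^+ 2 < 1 by have := mulr_ge0 (ltW hi0) L0; nra.
rewrite -!exprMn in lamL hiL2 *.
have c0 : 0 < 1 - (lam * L) ^+ 2 by lra.
have A1 : 1 <= (1 - (lam * L) ^+ 2)^-1.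
  by rewrite invf_ge1 //; have := sqr_ge0 (lam * L); lra.
have AA : (1 - (lam * L) ^+ 2)^-1 <= (1 - (hi * L) ^+ 2)^-1.
  by rewrite lef_pV2 ?posrE //; lra.
have B0 : 0 < (2 * lam * eta * mu)^-1 by rewrite invr_gt0 !mulr_gt0.
have BB : (2 * lam * eta * mu)^-1 <= (2 * lo * eta * mu)^-1.
  by rewrite lef_pV2 ?posrE ?mulr_gt0 // !ler_pM2r // ler_pM2l.
rewrite /betak -!exprMn; split.
- by rewrite invr_gt0; lra.
- by rewrite invf_lt1; lra.
- have hi_sum0 : 0 < (1 - (hi * L) ^+ 2)^-1 + (2 * lo * eta * mu)^-1.
    by rewrite addr_gt0 // invr_gt0 ?mulr_gt0 //; lra.
  by rewrite lef_pV2 ?posrE //; lra.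
Qed.

Definition invprod (R : realType) (beta : nat -> R) (j : nat) : R :=
  (\prod_(i < j) (1 - beta i))^-1.

Lemma pk_invprod (R : realType) (beta : nat -> R) j : pk beta j = invprod beta j.+1.
Proof. by []. Qed.

Lemma invprod_inv_le (R : realType) (beta : nat -> R) (b : R) k :
  (forall i, 0 <= 1 - beta i <= 1 - b) -> (invprod beta k)^-1 <= (1 - b) ^+ k.
Proof.
move=> beta_bnd; rewrite invrK -[k in _ ^+ k]card_ord -prodr_const.
exact: ler_prod.
Qed.

Section WeightedTelescoping.
Variables (R : realType) (beta alpha a d g : nat -> R) (D2 : R).
Hypotheses (beta_lt1 : forall j, 0 < 1 - beta j)
  (a_bnd : forall j, 0 <= a j <= D2) (d_bnd : forall j, 0 <= d j <= D2)
  (alpha_ge0 : forall j, 0 <= alpha j) (alpha0_le1 : alpha 0 <= 1)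
  (alphaS : forall j, alpha j.+1 <= (1 - beta j) * alpha j)
  (descent : forall j, a j.+1 <=
     (1 - beta j) * (a j + alpha j * (a j - a j.-1) + 2 * alpha j * d j) - g j).

Local Notation q := (invprod beta).

Lemma invprod_gt0 j : 0 < q j.
Proof. by rewrite /invprod invr_gt0 prodr_gt0. Qed.

Lemma invprodS j : q j.+1 * (1 - beta j) = q j.
Proof. by rewrite /invprod big_ord_recr /= invfM -mulrA mulVf ?mulr1 ?gt_eqF. Qed.

Let c j := q j * alpha j.

Let c_ge0 j : 0 <= c j.
Proof. exact: mulr_ge0 (ltW (invprod_gt0 j)) (alpha_ge0 j). Qed.

Let cS j : c j.+1 <= c j.
Proof. by rewrite /c -(invprodS j) -mulrA ler_pM2l ?invprod_gt0. Qed.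

Let c_le1 j : c j <= 1.
Proof.
elim: j => [|j ih]; last exact: le_trans (cS j) ih.
by rewrite /c /invprod big_ord0 invr1 mul1r.
Qed.

(* Lyapunov energy: the nonincreasing weight [c] absorbs the inertial term
   [a j - a j.-1]; at [j = 0], [a j.-1] is [a 0], matching x_{-1} = x_0. *)
Let W j := q j * a j - c j * a j.-1 + c j * D2.

Let W_step j : W j.+1 + q j.+1 * g j <= W j + 2 * c j * d j.
Proof.
have := ler_wpM2l (ltW (invprod_gt0 j.+1)) (descent j).
rewrite mulrBr mulrA invprodS => step.
have : c j.+1 * (D2 - a j) <= c j * (D2 - a j).
  by rewrite ler_wpM2r ?cS // subr_ge0; case/andP: (a_bnd j).
rewrite /W /c /=; lra.
Qed.

Lemma weighted_telescoping k : \sum_(j < k) q j.+1 * g j <= (2 * k%:R + 1) * D2.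
Proof.
have telescope : W k + \sum_(j < k) q j.+1 * g j <= W 0 + \sum_(j < k) 2 * c j * d j.
  elim: k => [|k ih]; first by rewrite !big_ord0.
  by rewrite !big_ord_recr /=; have := W_step k; lra.
have W0 : W 0 <= D2.
  rewrite /W /c /invprod big_ord0 invr1 !mul1r.
  have /andP[a0 a0D] := a_bnd 0.
  have : 0 <= (1 - alpha 0) * (D2 - a 0) by rewrite mulr_ge0 // subr_ge0.
  lra.
have Wk : 0 <= W k.
  have /andP[ak _] := a_bnd k; have /andP[_ ak1] := a_bnd k.-1.
  have := mulr_ge0 (ltW (invprod_gt0 k)) ak.
  have : 0 <= c k * (D2 - a k.-1) by rewrite mulr_ge0 ?subr_ge0.
  rewrite /W; lra.
have sum_d : \sum_(j < k) 2 * c j * d j <= 2 * k%:R * D2.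
  have -> : 2 * k%:R * D2 = \sum_(j < k) 2 * D2.
    by rewrite sumr_const card_ord -[_ *+ k]mulr_natr; ring.
  apply: ler_sum => j _; have /andP[dj0 djD] := d_bnd j.
  have : c j * d j <= 1 * d j by rewrite ler_wpM2r ?c_le1.
  lra.
lra.
Qed.

End WeightedTelescoping.

Section IneIREG.
Variables (R : realType) (n : nat) (F H : 'rV[R]_n -> 'rV[R]_n).
Variables (DomF DomH X Omega : set 'rV[R]_n) (PX POmega : 'rV[R]_n -> 'rV[R]_n).
Variables (LF LH mu eta lamlo lamhi : R) (lam alpha : nat -> R).
Variables (x w w' y : nat -> 'rV[R]_n).
Hypotheses (LF0 : 0 < LF) (LH0 : 0 < LH) (mu0 : 0 < mu) (eta0 : 0 < eta).
Hypotheses (monF : monotone_op DomF F) (lipF : lipschitz_op DomF F LF)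
  (lipH : lipschitz_op DomH H LH) (smonH : str_monotone_op DomH H mu).
Hypotheses (compactX : compact X) (convexX : convex_set X) (convexO : convex_set Omega)
  (XO : X `<=` Omega) (ODom : Omega `<=` DomF `&` DomH)
  (projX : is_projection X PX) (projO : is_projection Omega POmega).
Hypotheses (lamlo0 : 0 < lamlo) (lamhiL : lamhi < (LF + eta * LH)^-1)
  (lam_bnd : forall k, lamlo <= lam k <= lamhi).
Hypotheses (alpha_ge0 : forall k, 0 <= alpha k) (alpha0_le1 : alpha 0 <= 1)
  (alphaS : forall k, alpha k.+1 <= (1 - betak (lam k) (LF + eta * LH) eta mu) * alpha k).
Hypotheses (x0X : X (x 0))
  (def_w : forall k, w k = x k + alpha k *: (x k - x k.-1))
  (def_w' : forall k, w' k = POmega (w k))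
  (def_y : forall k, y k = PX (w k - lam k *: (F (w' k) + eta *: H (w' k))))
  (def_x : forall k, x k.+1 = PX (w k - lam k *: (F (y k) + eta *: H (y k)))).

Let L := LF + eta * LH.
Let beta_seq k := betak (lam k) L eta mu.
Let beta := ((1 - lamhi ^+ 2 * L ^+ 2)^-1 + (2 * lamlo * eta * mu)^-1)^-1.
Let DX := diamX X.
Let CH := supnorm H X.

Let L_gt0 : 0 < L.
Proof. by rewrite addr_gt0 // mulr_gt0. Qed.

Let lam_gt0 k : 0 < lam k.
Proof. by case/andP: (lam_bnd k) => /(lt_le_trans lamlo0). Qed.

Let lamhiL_lt1 : lamhi * L < 1.
Proof. by rewrite -ltr_pdivlMr // div1r. Qed.

Let lamL_lt1 k : lam k * L < 1.
Proof. by case/andP: (lam_bnd k) => _ /(ler_wpM2r (ltW L_gt0)) /le_lt_trans; apply. Qed.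

Lemma ineireg_beta_bounds k : [/\ 0 < beta_seq k, beta_seq k < 1 & beta <= beta_seq k].
Proof. exact: (@betak_bounds R (lam k) lamlo lamhi _ _ _ _ _ (ltW L_gt0) lamhiL_lt1). Qed.

Lemma ineireg_alpha_le1 k : alpha k <= 1.
Proof.
elim: k => // k ih; apply: le_trans (alphaS k) _.
have [beta0 _ _] := ineireg_beta_bounds k.
by rewrite -/L -/(beta_seq k) (le_trans _ ih) // ler_piMl // lerBlDr lerDl ltW.
Qed.

Lemma ineireg_feasible k : [/\ X (x k), X (y k) & Omega (w' k)].
Proof.
split; last by rewrite def_w'; exact: (projO _).1.
- by case: k => // k; rewrite def_x; exact: (projX _).1.
- by rewrite def_y; exact: (projX _).1.
Qed.

Lemma ineireg_extragradient k z : X z ->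
  dotp (x k.+1 - z) (x k.+1 - z) <= dotp (w k - z) (w k - z)
    - (1 - lam k ^+ 2 * L ^+ 2) * dotp (w k - y k) (w k - y k)
    - 2 * lam k * dotp (F (y k) + eta *: H (y k)) (y k - z).
Proof.
move=> Xz; have [_ Xy Ow'] := ineireg_feasible k.
have [Xx1 _ _] := ineireg_feasible k.+1.
set G1 := F (y k) + eta *: H (y k); set G2 := F (w' k) + eta *: H (w' k).
have dist : enorm (w' k - y k) ^+ 2 <= dotp (w k - y k) (w k - y k).
  have := projection_dist_le convexO projO (w k) (XO Xy); rewrite -def_w' => dist.
  by rewrite -enorm_sqr !expr2 ler_pM ?enorm_ge0.
have obtuse_x : dotp (w k - lam k *: G1 - x k.+1) (z - x k.+1) <= 0.
  by rewrite def_x; exact: (projection_obtuse convexX projX _ Xz).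
have obtuse_y : dotp (w k - lam k *: G2 - y k) (x k.+1 - y k) <= 0.
  by rewrite def_y; exact: (projection_obtuse convexX projX _ Xx1).
have lipG : dotp (G2 - G1) (x k.+1 - y k) <= L * enorm (w' k - y k) * enorm (x k.+1 - y k).
  have lip_dotp G LG : lipschitz_op (DomF `&` DomH) G LG ->
      dotp (G (w' k) - G (y k)) (x k.+1 - y k) <=
      LG * enorm (w' k - y k) * enorm (x k.+1 - y k).
    move=> lipG; apply: le_trans (cauchy_schwarz _ _) _.
    by rewrite ler_wpM2r ?enorm_ge0 //; exact: lipG (ODom Ow') (ODom (XO Xy)).
  have lF := lip_dotp F LF (fun u v Du Dv => lipF Du.1 Dv.1).
  have lH := lip_dotp H LH (fun u v Du Dv => lipH Du.2 Dv.2).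
  have -> : G2 - G1 = (F (w' k) - F (y k)) + eta *: (H (w' k) - H (y k)).
    by rewrite /G1 /G2 scalerBr opprD addrACA.
  rewrite dotpDl dotpZl /L; have := ler_wpM2l (ltW eta0) lH; lra.
exact: extragradient_step (ltW (lam_gt0 k)) dist obtuse_x obtuse_y lipG.
Qed.

Let beta_lt1 k : 0 < 1 - beta_seq k.
Proof. by have [_ b1 _] := ineireg_beta_bounds k; rewrite subr_gt0. Qed.

Lemma ineireg_descent k z : X z ->
  dotp (x k.+1 - z) (x k.+1 - z) <= (1 - beta_seq k) * dotp (w k - z) (w k - z)
    - 2 * lam k * (dotp (F z) (y k - z) + eta * dotp (H z) (y k - z)).
Proof.
move=> Xz; have [_ Xy _] := ineireg_feasible k.
have c0 : 0 < 1 - lam k ^+ 2 * L ^+ 2.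
  by have := lamL_lt1 k; have := mulr_ge0 (ltW (lam_gt0 k)) (ltW L_gt0); nra.
have d0 : 0 < 2 * lam k * eta * mu by rewrite !mulr_gt0.
have := dotp_sqrD_harmonic (w k - y k) (y k - z) c0 d0.
rewrite addrA subrK -/(betak _ _ _ _) -/(beta_seq k) => harmonic.
have := ler_wpM2l (ltW (mulr_gt0 (lam_gt0 k) eta0))
  (smonH (ODom (XO Xy)).2 (ODom (XO Xz)).2).
have := ler_wpM2l (ltW (lam_gt0 k)) (monF (ODom (XO Xy)).1 (ODom (XO Xz)).1).
have := ineireg_extragradient k Xz.
rewrite enorm_sqr (dotpDl (F (y k))) dotpZl (dotpBl (F (y k))) (dotpBl (H (y k))).
lra.
Qed.

Lemma ineireg_weighted_sum k z : X z ->
  \sum_(j < k) invprod beta_seq j.+1 *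
     (2 * lam j * (dotp (F z) (y j - z) + eta * dotp (H z) (y j - z)))
  <= (2 * k%:R + 1) * DX ^+ 2.
Proof.
move=> Xz.
have sqr_le a b : X a -> X b -> 0 <= dotp (a - b) (a - b) <= DX ^+ 2.
  move=> Xa Xb; have := diamX_ub compactX Xa Xb.
  by rewrite dotpp_ge0 -enorm_sqr !expr2 => ab; rewrite ler_pM ?enorm_ge0.
apply: (@weighted_telescoping _ beta_seq alpha (fun j => dotp (x j - z) (x j - z))
  (fun j => dotp (x j - x j.-1) (x j - x j.-1))
  (fun j => 2 * lam j * (dotp (F z) (y j - z) + eta * dotp (H z) (y j - z)))) => // j.
- by apply: sqr_le => //; have [] := ineireg_feasible j.
- by apply: sqr_le; [have [] := ineireg_feasible j | have [] := ineireg_feasible j.-1].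
have alpha01 : 0 <= alpha j <= 1 by rewrite alpha_ge0 ineireg_alpha_le1.
have := ler_wpM2l (ltW (beta_lt1 j)) (inertial_sqr_le (x j) (x j.-1) z alpha01).
rewrite -def_w; have := ineireg_descent j Xz; lra.
Qed.

Let S k := \sum_(j < k) lam j * invprod beta_seq j.+1.

Let weight_gt0 j : 0 < lam j * invprod beta_seq j.+1.
Proof. by rewrite mulr_gt0 ?lam_gt0 ?(invprod_gt0 beta_lt1). Qed.

Lemma ineireg_weights_ge k : (0 < k)%N -> lamlo * invprod beta_seq k <= S k.
Proof.
case: k => // k _; rewrite /S big_ord_recr /=.
apply: ler_wpDl; first by apply: sumr_ge0 => j _; exact: ltW.
by case/andP: (lam_bnd k) => lo_lam _; rewrite ler_wpM2r // ltW ?(invprod_gt0 beta_lt1).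
Qed.

Let S_gt0 k : (0 < k)%N -> 0 < S k.
Proof.
by move=> /ineireg_weights_ge; apply: lt_le_trans; rewrite mulr_gt0 ?(invprod_gt0 beta_lt1).
Qed.

Lemma ineireg_ybar_mean k v z : (0 < k)%N ->
  dotp v (ybar lam (pk beta_seq) eta y k - z) =
  (S k)^-1 * \sum_(j < k) lam j * invprod beta_seq j.+1 * dotp v (y j - z).
Proof.
move=> /S_gt0 S0.
have Lambda_eq : \sum_(j < k) lam j * eta * pk beta_seq j = eta * S k.
  by rewrite /S mulr_sumr; apply: eq_bigr => j _; rewrite pk_invprod; ring.
have sum_eq : \sum_(j < k) lam j * eta * pk beta_seq j * dotp v (y j - z) =
    eta * \sum_(j < k) lam j * invprod beta_seq j.+1 * dotp v (y j - z).
  by rewrite mulr_sumr; apply: eq_bigr => j _; rewrite pk_invprod; ring.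
rewrite /ybar /Lambdak (@dotp_weighted_mean _ _ _ (fun j => lam j * eta * pk beta_seq j)).
  by rewrite Lambda_eq sum_eq; field; rewrite !gt_eqF.
by rewrite Lambda_eq mulf_neq0 ?gt_eqF.
Qed.

Lemma ineireg_ybar_gap_ge k z : (0 < k)%N -> VIsol F X z ->
  0 <= dotp (F z) (ybar lam (pk beta_seq) eta y k - z).
Proof.
move=> k0 [_ zsol]; rewrite ineireg_ybar_mean //.
apply: mulr_ge0; first by rewrite invr_ge0; exact/ltW/S_gt0.
apply: sumr_ge0 => j _; rewrite mulr_ge0 ?(ltW (weight_gt0 j)) //.
by apply: zsol; have [] := ineireg_feasible j.
Qed.

Let DX_ge0 : 0 <= DX.
Proof. exact: le_trans (enorm_ge0 _) (diamX_ub compactX x0X x0X). Qed.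

Let H_le_CH v : X v -> enorm (H v) <= CH.
Proof.
have XH : X `<=` DomH by move=> u /XO /ODom [].
exact: (supnorm_ub compactX XH lipH (ltW LH0)).
Qed.

Lemma ineireg_F_sum_le k z : X z ->
  2 * \sum_(j < k) lam j * invprod beta_seq j.+1 * dotp (F z) (y j - z)
  <= (2 * k%:R + 1) * DX ^+ 2 + 2 * eta * (CH * DX) * S k.
Proof.
move=> Xz.
have H_sum : - (CH * DX) * S k <=
    \sum_(j < k) lam j * invprod beta_seq j.+1 * dotp (H z) (y j - z).
  rewrite /S mulr_sumr; apply: ler_sum => j _.
  rewrite mulrC ler_wpM2l ?(ltW (weight_gt0 j)) // lerNl -dotpNr opprB.
  have [_ Xy _] := ineireg_feasible j.
  apply: le_trans (cauchy_schwarz _ _) _.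
  by rewrite ler_pM ?enorm_ge0 ?H_le_CH //; exact: diamX_ub.
have split_sum : \sum_(j < k) invprod beta_seq j.+1 *
      (2 * lam j * (dotp (F z) (y j - z) + eta * dotp (H z) (y j - z))) =
    2 * \sum_(j < k) lam j * invprod beta_seq j.+1 * dotp (F z) (y j - z) +
    2 * eta * \sum_(j < k) lam j * invprod beta_seq j.+1 * dotp (H z) (y j - z).
  by rewrite !mulr_sumr -big_split; apply: eq_bigr => j _ /=; ring.
have := ineireg_weighted_sum k Xz; rewrite split_sum.
have := ler_wpM2l (ltW (mulr_gt0 (ltr0n _ 2) eta0)) H_sum; lra.
Qed.

Lemma ineireg_weights_inv_le k : (0 < k)%N -> (S k)^-1 <= (1 - beta) ^+ k / lamlo.
Proof.
move=> k0; have S0 := S_gt0 k0.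
apply: le_trans (_ : _ <= (lamlo * invprod beta_seq k)^-1) _.
  by rewrite lef_pV2 ?posrE ?ineireg_weights_ge ?mulr_gt0 ?(invprod_gt0 beta_lt1).
rewrite invfM mulrC ler_wpM2r ?invr_ge0 ?(ltW lamlo0) //.
by apply: invprod_inv_le => i; have [b0 b1 bb] := ineireg_beta_bounds i; lra.
Qed.

Lemma ineireg_ybar_gap_le k z : (0 < k)%N -> X z ->
  dotp (F z) (ybar lam (pk beta_seq) eta y k - z) <=
  k.+1%:R * (1 - beta) ^+ k * (DX ^+ 2 / lamlo) + eta * (lamhi * CH * DX / lamlo).
Proof.
move=> k0 Xz; have S0 := S_gt0 k0; have Sinv := ineireg_weights_inv_le k0.
rewrite ineireg_ybar_mean //; have := ineireg_F_sum_le k Xz.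
set T := \sum_(j < k) _ => T_le.
have CH_ge0 : 0 <= CH := le_trans (enorm_ge0 _) (H_le_CH x0X).
have mean_le : (S k)^-1 * T <= (S k)^-1 * ((k%:R + 2^-1) * DX ^+ 2) + eta * (CH * DX).
  have -> : (S k)^-1 * ((k%:R + 2^-1) * DX ^+ 2) + eta * (CH * DX) =
      (S k)^-1 * ((k%:R + 2^-1) * DX ^+ 2 + eta * (CH * DX) * S k).
    by field; rewrite gt_eqF.
  by rewrite ler_wpM2l ?invr_ge0 ?(ltW S0) //; lra.
have first_le : (S k)^-1 * ((k%:R + 2^-1) * DX ^+ 2) <=
    (1 - beta) ^+ k / lamlo * (k.+1%:R * DX ^+ 2).
  apply: ler_pM => //.
  - by rewrite invr_ge0 ltW.
  - by rewrite mulr_ge0 ?sqr_ge0 // addr_ge0 // invr_ge0.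
  - by rewrite ler_wpM2r ?sqr_ge0 // -[k.+1%:R]natr1 lerD2l invf_le1 // ler1n.
have second_le : CH * DX <= lamhi * CH * DX / lamlo.
  have lam_ratio : 1 <= lamhi / lamlo.
    by rewrite ler_pdivlMr // mul1r; case/andP: (lam_bnd 0) => /le_trans; apply.
  have -> : lamhi * CH * DX / lamlo = lamhi / lamlo * (CH * DX) by ring.
  by rewrite -[X in X <= _]mul1r ler_wpM2r ?mulr_ge0.
have := ler_wpM2l (ltW eta0) second_le; lra.
Qed.

End IneIREG.

Unset Implicit Arguments.

Theorem corollary4p18 (R : realType) (n : nat)
  (F H : 'rV[R]_n -> 'rV[R]_n) (DomF DomH X Omega : set 'rV[R]_n)
  (LF LH mu : R) (PX POmega : 'rV[R]_n -> 'rV[R]_n)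
  (eta lamlo lamhi : R) (lam alpha : nat -> R)
  (x w w' y : nat -> 'rV[R]_n) :
  0 < LF -> 0 < LH -> 0 < mu ->
  monotone_op DomF F -> monotone_op DomH H ->
  lipschitz_op DomF F LF -> lipschitz_op DomH H LH ->
  str_monotone_op DomH H mu ->
  X !=set0 -> compact X -> convex_set X ->
  Omega !=set0 -> closed Omega -> convex_set Omega ->
  X `<=` Omega -> Omega `<=` DomF `&` DomH ->
  is_projection X PX -> is_projection Omega POmega ->
  VIsol F X !=set0 ->
  0 < eta -> 0 < lamlo -> lamlo <= lamhi -> lamhi < (LF + eta * LH)^-1 ->
  (forall k, lamlo <= lam k <= lamhi) ->
  (forall k, 0 <= alpha k) -> alpha 0%N <= 1 ->
  (forall k, alpha k.+1 <=
     (1 - betak (lam k) (LF + eta * LH) eta mu) * alpha k) ->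
  (* IneIREG iterates; x_{-1} = x_0 is encoded by x (0.-1) = x 0 *)
  X (x 0%N) ->
  (forall k, w k = x k + alpha k *: (x k - x k.-1)) ->
  (forall k, w' k = POmega (w k)) ->
  (forall k, y k = PX (w k - lam k *: (F (w' k) + eta *: H (w' k)))) ->
  (forall k, x k.+1 = PX (w k - lam k *: (F (y k) + eta *: H (y k)))) ->
  let L := LF + eta * LH in
  let beta_seq := fun k => betak (lam k) L eta mu in
  let p := pk beta_seq in
  let beta := ((1 - lamhi ^+ 2 * L ^+ 2)^-1 + (2 * lamlo * eta * mu)^-1)^-1 in
  let DX := diamX X in
  let CH := supnorm H X in
  forall k : nat, (1 <= k)%N ->
    0 <= Gap (ybar lam p eta y k) F X /\
    Gap (ybar lam p eta y k) F X <=
      (k.+1)%:R * (1 - beta) ^+ k * (DX ^+ 2 / lamlo)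
      + eta * (lamhi * CH * DX / lamlo).
Proof.
move=> LF0 LH0 mu0 monF _ lipF lipH smonH X0 compactX convexX _ _ convexO XO ODom
  projX projO [z0 Qz0] eta0 lamlo0 _ lamhiL lam_bnd alpha_ge0 alpha0_le1 alphaS x0X
  def_w def_w' def_y def_x L beta_seq p beta DX CH k k_gt0.
have gap_le z : X z -> dotp (F z) (ybar lam p eta y k - z) <=
    k.+1%:R * (1 - beta) ^+ k * (DX ^+ 2 / lamlo) + eta * (lamhi * CH * DX / lamlo).
  exact: (ineireg_ybar_gap_le LF0 LH0 mu0 eta0 monF lipF lipH smonH compactX convexX
    convexO XO ODom projX projO lamlo0 lamhiL lam_bnd alpha_ge0 alpha0_le1 alphaS x0X
    def_w def_w' def_y def_x k_gt0).
split; last exact: Gap_le gap_le X0.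
apply: le_trans (le_Gap gap_le Qz0.1).
exact: (ineireg_ybar_gap_ge LF0 LH0 mu0 eta0 projX projO lamlo0 lamhiL lam_bnd x0X
  def_w' def_y def_x k_gt0 Qz0).
Qed.
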